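(* Let $\mathcal{H}$ be an infinite-dimensional complex Hilbert space. (a) Every finitely additive probability measure $\mu$ on $\mathcal{P}_{\mathbb{R}}(\mathcal{H})$ vanishes on all (projections onto) finite-dimensional real subspaces of $\mathcal{H}$. (b) If $\mathcal{H}$ is separable, there exists no probability measure on $\mathcal{P}_{\mathbb{R}}(\mathcal{H})$.
   Context: $\mathcal{P}_{\mathbb{R}}(\mathcal{H})$ is the set of real orthogonal projections onto closed real linear subspaces of $\mathcal{H}$, ordered by inclusion of ranges, with $0,1$, join = projection onto closed real span, meet = projection onto intersection, and involution $E'=1+iEi$, the projection onto the symplectic complement $\{\xi:\mathrm{Im}\langle\xi,h\rangle=0\ \forall h\in E\mathcal{H}\}$. Elements $E,F$ are separated if $E\le F'$. A probability measure on $\mathcal{P}_{\mathbb{R}}(\mathcal{H})$ is a map $\mu$ into $[0,1]$ with $\mu(0)=0$, $\mu(1)=1$, $E\le F\Rightarrow\mu(E)\le\mu(F)$, and $\mu(\bigvee_{E\in\mathcal{Q}_0}E)=\sum_{E\in\mathcal{Q}_0}\mu(E)$ for every countable subset $\mathcal{Q}_0$ of pairwise separated elements; it is finitely additive if this last identity is only required for finite such $\mathcal{Q}_0$. *)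

From mathcomp Require Import all_boot all_order all_algebra.
From mathcomp Require Import boolp classical_sets cardinality reals constructive_ereal ereal esum.
From mathcomp.real_closed Require Export complex.

Set Implicit Arguments.
Unset Strict Implicit.
Unset Printing Implicit Defensive.
Import Order.TTheory GRing.Theory Num.Theory.
Local Open Scope ring_scope.
Local Open Scope classical_set_scope.
Local Open Scope complex_scope.

Section Hilbert.
Variables (R : realType) (H : lmodType R[i]) (ip : H -> H -> R[i]).

Definition is_inner_product : Prop :=
  [/\ forall (a : R[i]) (x y z : H), ip (a *: x + y) z = a * ip x z + ip y z,
      forall x y : H, ip y x = (ip x y)^*,
      forall x : H, complex.Im (ip x x) = 0 /\ 0 <= complex.Re (ip x x)
    & forall x : H, ip x x = 0 -> x = 0].

Definition hnorm (x : H) : R := Num.sqrt (complex.Re (ip x x)).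

Definition hcauchy (u : nat -> H) : Prop :=
  forall e : R, 0 < e -> exists N : nat, forall m n : nat,
    (N <= m)%N -> (N <= n)%N -> hnorm (u m - u n) < e.

Definition hconverges (u : nat -> H) (x : H) : Prop :=
  forall e : R, 0 < e -> exists N : nat, forall n : nat,
    (N <= n)%N -> hnorm (u n - x) < e.

Definition hcomplete : Prop :=
  forall u : nat -> H, hcauchy u -> exists x : H, hconverges u x.

Definition is_hilbert : Prop := is_inner_product /\ hcomplete.

Definition infinite_dimensional : Prop :=
  forall n : nat, exists v : 'I_n -> H, forall c : 'I_n -> R[i],
    \sum_(i < n) c i *: v i = 0 -> forall i, c i = 0.

Definition hseparable : Prop :=
  exists d : nat -> H, forall (x : H) (e : R), 0 < e -> exists k : nat, hnorm (x - d k) < e.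

(* closed real-linear subspaces (= ranges of the real orthogonal projections in P_R(H)) *)
Definition real_subspace (E : set H) : Prop :=
  [/\ E 0, forall x y, E x -> E y -> E (x + y)
    & forall (r : R) x, E x -> E (r%:C *: x)].

Definition hclosed (E : set H) : Prop :=
  forall (u : nat -> H) (x : H), (forall n, E (u n)) -> hconverges u x -> E x.

Definition closed_real_subspace (E : set H) : Prop := real_subspace E /\ hclosed E.

Definition real_span (A : set H) : set H :=
  [set x | exists (n : nat) (c : 'I_n -> R) (v : 'I_n -> H),
     (forall i, A (v i)) /\ x = \sum_(i < n) (c i)%:C *: v i].

Definition hclosure (A : set H) : set H :=
  [set x | forall e : R, 0 < e -> exists y, A y /\ hnorm (x - y) < e].

(* join of a family of elements: projection onto the closed real span of their ranges *)
Definition pjoin (Q : set (set H)) : set H :=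
  hclosure (real_span (\bigcup_(E in Q) E)).

(* involution E' = 1 + iEi: projection onto the symplectic complement *)
Definition symp_compl (E : set H) : set H :=
  [set xi | forall h, E h -> complex.Im (ip xi h) = 0].

Definition separated (E F : set H) : Prop := E `<=` symp_compl F.

Definition pairwise_separated (Q : set (set H)) : Prop :=
  forall E F, Q E -> Q F -> E <> F -> separated E F.

Definition finite_dim_real_subspace (S : set H) : Prop :=
  exists (n : nat) (v : 'I_n -> H), S = real_span (range v).

(* mu is defined on P_R(H), represented by the closed real subspaces; its values on
   other sets are irrelevant. [countably] selects countable vs finite families. *)
Definition gen_prob_measure (countably : bool) (mu : set H -> R) : Prop :=
  [/\ forall E, closed_real_subspace E -> 0 <= mu E <= 1,
      mu [set 0] = 0,
      mu [set: H] = 1,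
      forall E F, closed_real_subspace E -> closed_real_subspace F ->
        E `<=` F -> mu E <= mu F
    & forall Q : set (set H),
        Q `<=` closed_real_subspace ->
        (if countably then is_true (countable Q) else finite_set Q) ->
        pairwise_separated Q ->
        ((mu (pjoin Q))%:E = \esum_(E in Q) (mu E)%:E)%E].

Definition prob_measure (mu : set H -> R) : Prop := gen_prob_measure true mu.
Definition fin_add_prob_measure (mu : set H -> R) : Prop := gen_prob_measure false mu.

End Hilbert.

From Pilot Require Import Defs.
From mathcomp Require Import all_boot all_order all_algebra.
From mathcomp Require Import boolp classical_sets cardinality reals constructive_ereal ereal esum fsbigop.
From mathcomp.real_closed Require Import complex.
From mathcomp Require Import ring lra.

Set Implicit Arguments.
Unset Strict Implicit.
Unset Printing Implicit Defensive.
Import Order.TTheory GRing.Theory Num.Theory.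
Local Open Scope ring_scope.
Local Open Scope classical_set_scope.
Local Open Scope complex_scope.

(* On a plane [A] where the symplectic form [symp = Im <.,.>] is nondegenerate and a
   vector [r] with [symp A r = 0], finite additivity gives
   [mu A = mu (A + R r) - mu (R r)]; so [mu A] only depends on [A + R r], and shearing
   [A] inside this space shows that the complex lines [C xi] and [C eta] of orthogonal
   vectors have the same measure.  In infinite dimension every complex line therefore
   has the measure of each line of an orthogonal family of any length [n], whose complex
   span has measure [n * mu (C xi) <= 1]: complex lines are null.  A finite-dimensional
   real subspace lies in the complex span of finitely many Gram-Schmidt lines, hence is
   null.  In a separable space the Gram-Schmidt lines of a dense sequence are countably
   many, pairwise separated, and span [H], so countable additivity would give [1 = 0]. *)

Lemma natmul_le1_le0 (F : archiRealFieldType) (x : F) :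
  (forall n : nat, n%:R * x <= 1) -> x <= 0.
Proof.
move=> hn; rewrite leNgt; apply/negP => x0.
have hb : x^-1 < (Num.Def.archi_bound x^-1)%:R.
  by apply: archi_boundP; rewrite invr_ge0 ltW.
move: hb; rewrite -(ltr_pM2r x0) mulVf ?gt_eqF // => /lt_le_trans/(_ (hn _)).
by rewrite ltxx.
Qed.

(** * Finite real spans *)

Section RealSubspace.
Variables (R : realType) (H : lmodType R[i]).
Implicit Types (E : set H) (x y : H).

Lemma real_subspace0 E : real_subspace E -> E 0.
Proof. by case. Qed.

Lemma real_subspaceD E x y : real_subspace E -> E x -> E y -> E (x + y).
Proof. by case=> _ hD _; apply: hD. Qed.

Lemma real_subspaceZ E (r : R) x : real_subspace E -> E x -> E (r%:C *: x).
Proof. by case=> _ _ hZ; apply: hZ. Qed.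

Lemma real_subspaceN E x : real_subspace E -> E x -> E (- x).
Proof. by move=> hE /(real_subspaceZ (-1) hE); rewrite rmorphN1 scaleN1r. Qed.

Lemma real_subspaceB E x y : real_subspace E -> E x -> E y -> E (x - y).
Proof. by move=> hE hx hy; apply: real_subspaceD (real_subspaceN _ _). Qed.

Lemma real_subspace_sum E (I : Type) (r : seq I) (P : pred I) (c : I -> R) (v : I -> H) :
  real_subspace E -> (forall i, E (v i)) -> E (\sum_(i <- r | P i) (c i)%:C *: v i).
Proof.
move=> hE hv; apply: (big_ind E) => [|a b|i _]; first exact: real_subspace0.
  exact: real_subspaceD.
exact: real_subspaceZ.
Qed.

Lemma real_span_min (X Y : set H) : real_subspace Y -> X `<=` Y -> real_span X `<=` Y.
Proof. by move=> hY XY _ [n [c [v [hv ->]]]]; apply: real_subspace_sum => // i; apply: XY. Qed.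

Lemma real_spanD (X : set H) a b : X a -> X b -> real_span X (a + b).
Proof.
move=> ha hb; exists 2, (fun _ => 1), (fun i : 'I_2 => if val i == 0%N then a else b).
split; first by move=> i; case: ifP.
by rewrite !big_ord_recr big_ord0 /= rmorph1 !scale1r add0r.
Qed.

Definition rspan (f : nat -> H) (n : nat) : set H :=
  [set x | exists c : nat -> R, x = \sum_(i < n) (c i)%:C *: f i].

Lemma rspan_real_subspace f n : real_subspace (rspan f n).
Proof.
split.
- by exists (fun _ => 0); rewrite big1 // => i _; rewrite rmorph0 scale0r.
- move=> _ _ [c ->] [c' ->]; exists (fun i => c i + c' i).
  by rewrite -big_split; apply: eq_bigr => i _; rewrite rmorphD scalerDl.
- move=> r _ [c ->]; exists (fun i => r * c i).
  by rewrite scaler_sumr; apply: eq_bigr => i _; rewrite scalerA rmorphM.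
Qed.

Lemma rspan0 f : rspan f 0 = [set 0].
Proof.
apply/seteqP; split=> x; first by case=> c ->; rewrite big_ord0.
by move=> ->; apply: real_subspace0 (rspan_real_subspace f 0).
Qed.

Lemma rspanS f n x :
  rspan f n.+1 x <-> exists y (r : R), rspan f n y /\ x = y + r%:C *: f n.
Proof.
split=> [[c ->]|[y [r [[c ->] ->]]]].
  by rewrite big_ord_recr; exists (\sum_(i < n) (c i)%:C *: f i), (c n); split; first exists c.
exists (fun i => if i == n then r else c i).
rewrite big_ord_recr /= eqxx; congr (_ + _); apply: eq_bigr => i _.
by rewrite ltn_eqF.
Qed.

Lemma rspan_min f n (Y : set H) : real_subspace Y ->
  (forall i, (i < n)%N -> Y (f i)) -> rspan f n `<=` Y.
Proof.
by move=> hY hf _ [c ->]; apply: real_subspace_sum => // i; apply: hf.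
Qed.

Lemma rspan_mem f n i : (i < n)%N -> rspan f n (f i).
Proof.
elim: n => // n IH; rewrite ltnS leq_eqVlt => /orP[/eqP ->|/IH hi]; apply/rspanS.
  exists 0, 1; rewrite add0r rmorph1 scale1r; split=> //.
  exact: real_subspace0 (rspan_real_subspace _ _).
by exists (f i), 0; rewrite rmorph0 scale0r addr0.
Qed.

Lemma rspan_le f n m : (n <= m)%N -> rspan f n `<=` rspan f m.
Proof.
move=> nm; apply: rspan_min; first exact: rspan_real_subspace.
by move=> i hi; apply: rspan_mem; apply: leq_trans nm.
Qed.

Lemma rspan_real_span f n (X : set H) :
  (forall i, (i < n)%N -> X (f i)) -> rspan f n `<=` real_span X.
Proof.
move=> hX _ [c ->]; exists n, (fun i => c i), (fun i => f i).
by split=> // i; apply: hX.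
Qed.

Definition ord_fun n (u : 'I_n -> H) (k : nat) : H := oapp u 0 (insub k).

Lemma ord_funE n (u : 'I_n -> H) (i : 'I_n) : ord_fun u i = u i.
Proof. by rewrite /ord_fun valK. Qed.

Lemma real_span_range n (v : 'I_n -> H) : real_span (range v) = rspan (ord_fun v) n.
Proof.
apply/seteqP; split.
  apply: real_span_min; first exact: rspan_real_subspace.
  by move=> _ [i _ <-]; rewrite -ord_funE; apply: rspan_mem.
by apply: rspan_real_span => i hi; exists (Ordinal hi); rewrite // -(ord_funE v (Ordinal hi)).
Qed.

Definition lspan (s : seq H) : set H := rspan (nth 0 s) (size s).

Lemma lspan_real_subspace s : real_subspace (lspan s).
Proof. exact: rspan_real_subspace. Qed.

Lemma lspan_mem s i : (i < size s)%N -> lspan s (nth 0 s i).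
Proof. exact: rspan_mem. Qed.

Lemma lspan_min s (Y : set H) : real_subspace Y ->
  (forall i, (i < size s)%N -> Y (nth 0 s i)) -> lspan s `<=` Y.
Proof. exact: rspan_min. Qed.

Lemma lspan1P a x : lspan [:: a] x <-> exists c : R, x = c%:C *: a.
Proof.
split=> [[c ->]|[c1 ->]]; last exists (fun=> c1).
  by exists (c 0%N); rewrite big_ord_recl big_ord0 addr0.
by rewrite big_ord_recl big_ord0 addr0.
Qed.

Lemma lspan2P a b x :
  lspan [:: a; b] x <-> exists c1 c2 : R, x = c1%:C *: a + c2%:C *: b.
Proof.
split=> [[c ->]|[c1 [c2 ->]]]; last exists (fun i => if i == 0%N then c1 else c2).
  by exists (c 0%N), (c 1%N); rewrite !big_ord_recl big_ord0 addr0.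
by rewrite !big_ord_recl big_ord0 addr0.
Qed.

Lemma lspan3P a b c x : lspan [:: a; b; c] x <->
  exists c1 c2 c3 : R, x = c1%:C *: a + c2%:C *: b + c3%:C *: c.
Proof.
split=> [[k ->]|[c1 [c2 [c3 ->]]]].
  by exists (k 0%N), (k 1%N), (k 2%N); rewrite !big_ord_recl big_ord0 addr0 addrA.
exists (fun i => if i == 0%N then c1 else if i == 1%N then c2 else c3).
by rewrite !big_ord_recl big_ord0 addr0 addrA.
Qed.

Definition cline x : set H := lspan [:: x; 'i *: x].

Lemma cline0 : cline 0 = [set 0].
Proof.
apply/seteqP; split=> x; first by move=> /lspan2P[c1 [c2 ->]]; rewrite !scaler0 addr0.
by move=> ->; apply: real_subspace0 (lspan_real_subspace _).
Qed.

End RealSubspace.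

Arguments rspan_mem {R H f n} i.
Arguments lspan_mem {R H s} i.

(** * Inner product, real inner product and symplectic form *)

Section InnerProduct.
Variables (R : realType) (H : lmodType R[i]) (ip : H -> H -> R[i]).
Hypothesis ip_inner : is_inner_product ip.
Implicit Types (a b g x y z w : H) (E F S T : set H).

Lemma ipDl x y z : ip (x + y) z = ip x z + ip y z.
Proof. by case: ip_inner => h _ _ _; rewrite -{1}[x]scale1r h mul1r. Qed.

Lemma ip0l z : ip 0 z = 0.
Proof. by apply/eqP; rewrite -[eqbLHS](addrK (ip 0 z)) -ipDl addr0 subrr. Qed.

Lemma ipZl (a : R[i]) x z : ip (a *: x) z = a * ip x z.
Proof. by case: ip_inner => h _ _ _; rewrite -[a *: x]addr0 h ip0l addr0. Qed.

Lemma ipNl x z : ip (- x) z = - ip x z.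
Proof. by rewrite -scaleN1r ipZl mulN1r. Qed.

Lemma ipC x y : ip y x = (ip x y)^*.
Proof. by case: ip_inner. Qed.

Lemma ipDr z x y : ip z (x + y) = ip z x + ip z y.
Proof.
rewrite ipC ipDl (ipC x z) (ipC y z).
by case: (ip x z) => ? ?; case: (ip y z) => ? ? /=; congr Complex; ring.
Qed.

Lemma ipZr z (a : R[i]) x : ip z (a *: x) = a^* * ip z x.
Proof.
rewrite ipC ipZl (ipC x z).
by case: a => ? ?; case: (ip x z) => ? ? /=; congr Complex; ring.
Qed.

Lemma ip0r z : ip z 0 = 0.
Proof. by rewrite ipC ip0l conjc0. Qed.

Definition rip x y : R := complex.Re (ip x y).
Definition symp x y : R := complex.Im (ip x y).
(* [Defs.separated ip E F] says exactly that [symp] vanishes on [E x F]. *)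

Lemma ripDl x y z : rip (x + y) z = rip x z + rip y z.
Proof. by rewrite /rip ipDl; case: (ip x z) => ? ?; case: (ip y z). Qed.
Lemma ripDr z x y : rip z (x + y) = rip z x + rip z y.
Proof. by rewrite /rip ipDr; case: (ip z x) => ? ?; case: (ip z y). Qed.
Lemma ripZl (r : R) x z : rip (r%:C *: x) z = r * rip x z.
Proof. by rewrite /rip ipZl; case: (ip x z) => ? ? /=; rewrite mul0r subr0. Qed.
Lemma ripZr (r : R) z x : rip z (r%:C *: x) = r * rip z x.
Proof. by rewrite /rip ipZr; case: (ip z x) => ? ? /=; rewrite oppr0 mul0r subr0. Qed.
Lemma ripNl x z : rip (- x) z = - rip x z.
Proof. by rewrite -scaleN1r -(rmorphN1 (real_complex R)) ripZl mulN1r. Qed.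
Lemma ripNr z x : rip z (- x) = - rip z x.
Proof. by rewrite -scaleN1r -(rmorphN1 (real_complex R)) ripZr mulN1r. Qed.
Lemma ripBl x y z : rip (x - y) z = rip x z - rip y z.
Proof. by rewrite ripDl ripNl. Qed.
Lemma ripBr z x y : rip z (x - y) = rip z x - rip z y.
Proof. by rewrite ripDr ripNr. Qed.
Lemma ripC x y : rip y x = rip x y.
Proof. by rewrite /rip ipC; case: (ip x y). Qed.
Lemma rip0l z : rip 0 z = 0.
Proof. by rewrite /rip ip0l. Qed.
Lemma rip0r z : rip z 0 = 0.
Proof. by rewrite /rip ip0r. Qed.

Lemma sympDl x y z : symp (x + y) z = symp x z + symp y z.
Proof. by rewrite /symp ipDl; case: (ip x z) => ? ?; case: (ip y z). Qed.
Lemma sympDr z x y : symp z (x + y) = symp z x + symp z y.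
Proof. by rewrite /symp ipDr; case: (ip z x) => ? ?; case: (ip z y). Qed.
Lemma sympZl (r : R) x z : symp (r%:C *: x) z = r * symp x z.
Proof. by rewrite /symp ipZl; case: (ip x z) => ? ? /=; rewrite mul0r addr0. Qed.
Lemma sympZr (r : R) z x : symp z (r%:C *: x) = r * symp z x.
Proof. by rewrite /symp ipZr; case: (ip z x) => ? ? /=; rewrite oppr0 mul0r addr0. Qed.
Lemma sympNl x z : symp (- x) z = - symp x z.
Proof. by rewrite -scaleN1r -(rmorphN1 (real_complex R)) sympZl mulN1r. Qed.
Lemma sympNr z x : symp z (- x) = - symp z x.
Proof. by rewrite -scaleN1r -(rmorphN1 (real_complex R)) sympZr mulN1r. Qed.
Lemma sympBl x y z : symp (x - y) z = symp x z - symp y z.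
Proof. by rewrite sympDl sympNl. Qed.
Lemma sympBr z x y : symp z (x - y) = symp z x - symp z y.
Proof. by rewrite sympDr sympNr. Qed.
Lemma sympC x y : symp y x = - symp x y.
Proof. by rewrite /symp ipC; case: (ip x y). Qed.

Lemma symp_il x y : symp ('i *: x) y = rip x y.
Proof. by rewrite /symp /rip ipZl; case: (ip x y) => ? ? /=; lra. Qed.
Lemma symp_ir x y : symp x ('i *: y) = - rip x y.
Proof. by rewrite /symp /rip ipZr; case: (ip x y) => ? ? /=; lra. Qed.
Lemma rip_il x y : rip ('i *: x) y = - symp x y.
Proof. by rewrite /symp /rip ipZl; case: (ip x y) => ? ? /=; lra. Qed.
Lemma rip_ir x y : rip x ('i *: y) = symp x y.
Proof. by rewrite /symp /rip ipZr; case: (ip x y) => ? ? /=; lra. Qed.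

Lemma symp_xx x : symp x x = 0.
Proof. by have := sympC x x; lra. Qed.

Lemma rip_ge0 x : 0 <= rip x x.
Proof. by case: ip_inner => _ _ h _; case: (h x). Qed.

Lemma rip_eq0 x : rip x x = 0 -> x = 0.
Proof.
case: ip_inner => _ _ h h0 e; apply: h0; have [hi _] := h x.
by move: e hi; rewrite /rip; case: (ip x x) => a b /= -> ->.
Qed.

Lemma rip_gt0 x : x != 0 -> 0 < rip x x.
Proof. by move=> hx; rewrite lt_def rip_ge0 andbT; apply: contra_neq hx; apply: rip_eq0. Qed.

Lemma ip_xx_neq0 x : x != 0 -> ip x x != 0.
Proof. by move=> /rip_gt0; apply: contraTneq => h; rewrite /rip h ltxx. Qed.

Lemma ip_eq0 x y : rip x y = 0 -> symp x y = 0 -> ip x y = 0.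
Proof. by rewrite /rip /symp; case: (ip x y) => a b /= -> ->. Qed.

Lemma scaleii x : 'i *: ('i *: x) = - x.
Proof. by rewrite scalerA -expr2 sqr_i scaleN1r. Qed.

Lemma scaleiC (r : R) x : 'i *: (r%:C *: x) = r%:C *: ('i *: x).
Proof. by rewrite !scalerA mulrC. Qed.

Lemma hnorm0 : hnorm ip 0 = 0.
Proof. by rewrite /hnorm -/(rip _ _) rip0l sqrtr0. Qed.

Lemma hnormB_sym x y : hnorm ip (x - y) = hnorm ip (y - x).
Proof. by rewrite /hnorm -!/(rip _ _) -opprB ripNl ripNr opprK. Qed.

(** * Orthogonal projections onto finite real spans *)

Definition is_rproj S (P : H -> H) :=
  (forall x, S (P x)) /\ (forall x s, S s -> rip (x - P x) s = 0).

Lemma rproj_extend S T P w : S `<=` T -> T w -> is_rproj S P ->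
  (forall s, S s -> rip w s = 0) ->
  (forall t, T t -> exists s (r : R), S s /\ t = s + r%:C *: w) ->
  real_subspace T -> exists P', is_rproj T P'.
Proof.
move=> ST Tw [PS Po] ow decT hT.
have owP x : rip (P x) w = 0 by rewrite ripC ow.
have [/rip_eq0 w0|wn0] := eqVneq (rip w w) 0.
  exists P; split=> [x|x t /decT[s [r [hs ->]]]]; first exact: ST.
  by rewrite w0 scaler0 addr0; apply: Po.
exists (fun x => P x + (rip x w / rip w w)%:C *: w); split.
  by move=> x; apply: real_subspaceD => //; [apply: ST | apply: real_subspaceZ].
move=> x t /decT[s [r [hs ->]]].
have e1 : rip x s = rip (P x) s by apply/eqP; rewrite -subr_eq0 -ripBl Po.
rewrite opprD addrA !ripDl !ripDr !ripNl !ripZl !ripZr owP (ow s hs) e1.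
by field.
Qed.

Lemma rspan_rproj f n : exists P, is_rproj (rspan f n) P.
Proof.
elim: n => [|n [P [PS Po]]].
  by exists (fun=> 0); rewrite rspan0; split=> // x s ->; rewrite rip0r.
have hS := rspan_real_subspace f n.
have sub : rspan f n `<=` rspan f n.+1 by apply: rspan_le.
pose w := f n - P (f n).
apply: (rproj_extend (P := P) (w := w) sub); last exact: rspan_real_subspace.
- by apply: real_subspaceB; [apply: rspan_real_subspace | apply: rspan_mem | apply: sub].
- by split.
- by move=> s; apply: Po.
move=> _ /rspanS[y [r [hy ->]]]; exists (y + r%:C *: P (f n)), r; split.
  by apply: real_subspaceD => //; apply: real_subspaceZ.
by rewrite /w scalerBr addrCA addrK addrC.
Qed.

Lemma rproj_closed S P : real_subspace S -> is_rproj S P -> hclosed ip S.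
Proof.
move=> hS [PS Po] u x hu hc.
suff -> : x = P x by [].
apply/eqP; rewrite -subr_eq0; apply/eqP/rip_eq0.
set v := x - P x; apply/eqP; apply: contraT => hv.
have hpos : 0 < Num.sqrt (rip v v) by rewrite sqrtr_gt0 lt_def hv rip_ge0.
have [N /(_ N (leqnn N))] := hc _ hpos.
rewrite /hnorm -/(rip _ _).
have -> : u N - x = (u N - P x) - v by rewrite /v opprB addrA subrK.
have hva : rip v (u N - P x) = 0 by apply: Po; apply: real_subspaceB.
(* Pythagoras: [v = x - P x] is orthogonal to [S], so [S] stays at distance [|v|] from [x]. *)
have hle : rip v v <= rip (u N - P x - v) (u N - P x - v).
  move: (u N - P x) hva => a hva.
  clearbody v; rewrite !ripBl !ripBr (ripC v a) hva; have := rip_ge0 a; lra.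
by move=> hlt; have := le_lt_trans (ler_wsqrtr hle) hlt; rewrite ltxx.
Qed.

Lemma rspan_closed f n : closed_real_subspace ip (rspan f n).
Proof.
have [P hP] := rspan_rproj f n; split; first exact: rspan_real_subspace.
exact: rproj_closed (rspan_real_subspace f n) hP.
Qed.

Lemma lspan_closed (s : seq H) : closed_real_subspace ip (lspan s).
Proof. exact: rspan_closed. Qed.

Lemma hclosure_id E : hclosed ip E -> hclosure ip E = E.
Proof.
move=> hE; apply/seteqP; split=> x hx; last first.
  by move=> e he; exists x; rewrite subrr hnorm0.
have /choice[y hy] k : exists y, E y /\ hnorm ip (x - y) < k.+1%:R^-1.
  by apply: hx; rewrite invr_gt0 ltr0Sn.
apply: (hE y) => [k|e he]; first by case: (hy k).
have hb : e^-1 < (Num.Def.archi_bound e^-1)%:R.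
  by apply: archi_boundP; rewrite invr_ge0 ltW.
exists (Num.Def.archi_bound e^-1) => n hn.
rewrite hnormB_sym; apply: lt_trans (hy n).2 _.
rewrite invf_plt ?posrE ?ltr0Sn //; apply: lt_le_trans hb _.
by rewrite ler_nat; apply: leqW.
Qed.

(** * Separation and joins *)

Lemma symp_compl_real_subspace E : real_subspace (symp_compl ip E).
Proof.
split=> [h _|x y hx hy h hh|r x hx h hh]; first by rewrite ip0l.
  by rewrite -/(symp _ _) sympDl /symp hx ?hy ?addr0.
by rewrite -/(symp _ _) sympZl /symp hx ?mulr0.
Qed.

Lemma separated_sym E F : Defs.separated ip E F -> Defs.separated ip F E.
Proof. by move=> hEF x hx h hh; rewrite -/(symp _ _) sympC [symp _ _]hEF ?oppr0. Qed.

Lemma symp_orth_real_subspace g : real_subspace [set h | symp g h = 0].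
Proof.
split=> /= [|x y hx hy|r x hx]; first by rewrite /symp ip0r.
  by rewrite sympDr hx hy addr0.
by rewrite sympZr hx mulr0.
Qed.

Lemma separated_lspan (s t : seq H) :
  (forall i j, (i < size s)%N -> (j < size t)%N -> symp (nth 0 s i) (nth 0 t j) = 0) ->
  Defs.separated ip (lspan s) (lspan t).
Proof.
move=> hst; apply: lspan_min; first exact: symp_compl_real_subspace.
move=> i hi h; apply: (lspan_min (symp_orth_real_subspace _)).
by move=> j hj; apply: hst.
Qed.

Lemma pjoin2_eq (A B T : set H) : closed_real_subspace ip T -> A `<=` T -> B `<=` T ->
  (forall t, T t -> exists a b, [/\ A a, B b & t = a + b]) ->
  pjoin ip ([set A] `|` [set B]) = T.
Proof.
move=> [hT hTc] AT BT hdec; rewrite /pjoin.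
suff -> : real_span (\bigcup_(E in [set A] `|` [set B]) E) = T by apply: hclosure_id.
apply/seteqP; split.
  by apply: real_span_min => // x [E [->|->]]; [apply: AT | apply: BT].
move=> t /hdec[a [b [ha hb ->]]].
by apply: real_spanD; [exists A; first left | exists B; first right].
Qed.

Lemma lspan2_scale a b (c : R) : c != 0 -> lspan [:: a; c%:C *: b] = lspan [:: a; b].
Proof.
move=> c0; apply/seteqP; split=> x /lspan2P[c1 [c2 ->]]; apply/lspan2P.
  by exists c1, (c2 * c); rewrite scalerA rmorphM.
by exists c1, (c2 / c); rewrite scalerA -rmorphM divfK.
Qed.

Lemma lspan3_shear a1 a2 r (s1 s2 : R) :
  lspan [:: a1 + s1%:C *: r; a2 + s2%:C *: r; r] = lspan [:: a1; a2; r].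
Proof.
have sub b1 b2 (t1 t2 : R) :
    lspan [:: b1 + t1%:C *: r; b2 + t2%:C *: r; r] `<=` lspan [:: b1; b2; r].
  have hS := lspan_real_subspace [:: b1; b2; r].
  apply: (lspan_min hS) => -[|[|[|]]] //= _; last exact: (lspan_mem 2).
    exact: (real_subspaceD hS (lspan_mem 0 _) (real_subspaceZ _ hS (lspan_mem 2 _))).
  exact: (real_subspaceD hS (lspan_mem 1 _) (real_subspaceZ _ hS (lspan_mem 2 _))).
apply/seteqP; split; first exact: sub.
have := sub (a1 + s1%:C *: r) (a2 + s2%:C *: r) (- s1) (- s2).
by rewrite !rmorphN !scaleNr !addrK.
Qed.

(** * Complex spans and Gram-Schmidt *)

(* [cspan d n] is the complex span of [d 0, ..., d n.-1], as the real span of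
   [d 0, i d 0, d 1, i d 1, ...]. *)
Definition cgen (d : nat -> H) (k : nat) : H :=
  if odd k then 'i *: d k./2 else d k./2.

Definition cspan (d : nat -> H) (n : nat) : set H := rspan (cgen d) n.*2.

Lemma cspan0 d : cspan d 0 = [set 0].
Proof. exact: rspan0. Qed.

Lemma cspanS d n x : cspan d n.+1 x <->
  exists y (r s : R), cspan d n y /\ x = y + r%:C *: d n + s%:C *: ('i *: d n).
Proof.
have ev : cgen d n.*2 = d n by rewrite /cgen odd_double doubleK.
have od : cgen d n.*2.+1 = 'i *: d n by rewrite /cgen /= odd_double /= uphalf_double.
rewrite /cspan doubleS; split.
  by move=> /rspanS[_ [s [/rspanS[y [r [hy ->]]] ->]]]; exists y, r, s; rewrite ev od.
move=> [y [r [s [hy ->]]]]; apply/rspanS; exists (y + r%:C *: d n), s.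
by rewrite od; split=> //; apply/rspanS; exists y, r; rewrite ev.
Qed.

Lemma cspan_real_subspace d n : real_subspace (cspan d n).
Proof. exact: rspan_real_subspace. Qed.

Lemma cspan_closed d n : closed_real_subspace ip (cspan d n).
Proof. exact: rspan_closed. Qed.

Lemma cspan_le d m n : (m <= n)%N -> cspan d m `<=` cspan d n.
Proof. by move=> mn; apply: rspan_le; rewrite leq_double. Qed.

Lemma cspan_mem d j n : (j < n)%N -> cspan d n (d j).
Proof.
move=> jn; have -> : d j = cgen d j.*2 by rewrite /cgen odd_double doubleK.
by apply: rspan_mem; rewrite ltn_double.
Qed.

Lemma cspanZi d n x : cspan d n x -> cspan d n ('i *: x).
Proof.
elim: n x => [|n IH] x; first by rewrite cspan0 => ->; rewrite scaler0.
move=> /cspanS[y [r [s [/IH hy ->]]]]; apply/cspanS; exists ('i *: y), (- s), r.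
split=> //; rewrite !scalerDr !scaleiC scaleii rmorphN scaleNr scalerN.
by rewrite -addrA [X in _ + X]addrC addrA.
Qed.

Definition cproj d n : H -> H := projT1 (cid (rspan_rproj (cgen d) n.*2)).

Lemma cprojP d n : is_rproj (cspan d n) (cproj d n).
Proof. exact: projT2 (cid (rspan_rproj (cgen d) n.*2)). Qed.

Definition gs d n : H := d n - cproj d n (d n).

Lemma gs_orth d n y : cspan d n y -> ip (gs d n) y = 0.
Proof.
have [_ Po] := cprojP d n.
by move=> hy; apply: ip_eq0; last rewrite -rip_ir; apply: Po => //; apply: cspanZi.
Qed.

Lemma gs_mem d n : cspan d n.+1 (gs d n).
Proof.
have [PS _] := cprojP d n.
apply: real_subspaceB; first exact: cspan_real_subspace.
  exact: cspan_mem.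
exact: cspan_le (leqnSn n) _ (PS _).
Qed.

Lemma gs_orth2 d j k : j != k -> ip (gs d j) (gs d k) = 0.
Proof.
wlog jk : j k / (k < j)%N => [hw|_].
  rewrite neq_ltn => /orP[jk|kj]; last by apply: hw; rewrite // gt_eqF.
  by rewrite ipC hw ?conjc0 // gt_eqF.
exact/gs_orth/(cspan_le jk)/gs_mem.
Qed.

Lemma cspanS_gs d n x : cspan d n.+1 x -> exists y (r s : R),
  cspan d n y /\ x = y + (r%:C *: gs d n + s%:C *: ('i *: gs d n)).
Proof.
have [PS _] := cprojP d n.
move=> /cspanS[y [r [s [hy ->]]]]; set p := cproj d n (d n).
have hS := cspan_real_subspace d n.
exists (y + r%:C *: p + s%:C *: ('i *: p)), r, s; split.
  have hp : cspan d n p by apply: PS.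
  apply: (real_subspaceD hS); first exact: (real_subspaceD hS hy (real_subspaceZ _ hS hp)).
  exact/(real_subspaceZ _ hS)/cspanZi.
rewrite /gs -/p -[d n in LHS](subrK p) !scalerDr.
by rewrite -addrA addrACA [X in _ + X = _]addrC !addrA.
Qed.

Lemma cspanS_join d n :
  pjoin ip ([set cline (gs d n)] `|` [set cspan d n]) = cspan d n.+1.
Proof.
have hT := cspan_real_subspace d n.+1.
apply: pjoin2_eq; first exact: cspan_closed.
- by apply: (lspan_min hT) => -[|[|]] //= _; [|apply: cspanZi]; apply: gs_mem.
- exact: cspan_le.
move=> _ /cspanS_gs[y [r [s [hy ->]]]]; exists (r%:C *: gs d n + s%:C *: ('i *: gs d n)), y.
by split=> //; [apply/lspan2P; exists r, s | rewrite addrC].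
Qed.

Lemma cspan_gs d n : cspan d n `<=` cspan (gs d) n.
Proof.
elim: n => [|n IH] x; first by rewrite !cspan0.
have hT := cspan_real_subspace (gs d) n.+1.
have le := @cspan_le (gs d) _ _ (leqnSn n).
have dn : cspan (gs d) n.+1 (d n).
  rewrite -[d n](subrK (cproj d n (d n))).
  by apply: (real_subspaceD hT); [apply: cspan_mem | apply/le/IH; case: (cprojP d n)].
move=> /cspanS[y [r [s [/IH/le hy ->]]]].
apply: (real_subspaceD hT); first exact: (real_subspaceD hT hy (real_subspaceZ _ hT dn)).
exact/(real_subspaceZ _ hT)/cspanZi.
Qed.

Lemma ip_cline_r w x y : ip x w = 0 -> cline w y -> ip x y = 0.
Proof. by move=> o /lspan2P[c1 [c2 ->]]; rewrite ipDr !ipZr o !mulr0 addr0. Qed.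

Lemma ip_cline_l w x y : ip w y = 0 -> cline w x -> ip x y = 0.
Proof. by move=> o /lspan2P[c1 [c2 ->]]; rewrite ipDl !ipZl o !mulr0 addr0. Qed.

Lemma orth_separated E F :
  (forall x y, E x -> F y -> ip x y = 0) -> Defs.separated ip E F.
Proof. by move=> o x Ex y Fy; rewrite o. Qed.

Definition span_below n (u : 'I_n -> H) (j : nat) : set H :=
  [set x | exists c : 'I_n -> R[i],
     x = \sum_i c i *: u i /\ forall i : 'I_n, (j <= i)%N -> c i = 0].

Lemma span_below_real_subspace n (u : 'I_n -> H) j : real_subspace (span_below u j).
Proof.
split.
- by exists (fun=> 0); split=> //; rewrite big1 // => i _; rewrite scale0r.
- move=> _ _ [c [-> hc]] [c' [-> hc']]; exists (fun i => c i + c' i); split.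
    by rewrite -big_split; apply: eq_bigr => i _; rewrite scalerDl.
  by move=> i hi; rewrite hc ?hc' ?addr0.
- move=> r _ [c [-> hc]]; exists (fun i => r%:C * c i); split.
    by rewrite scaler_sumr; apply: eq_bigr => i _; rewrite scalerA.
  by move=> i hi; rewrite hc ?mulr0.
Qed.

Lemma sum_scale_delta n (u : 'I_n -> H) (k : 'I_n) (a : R[i]) :
  \sum_i (if i == k then a else 0) *: u i = a *: u k.
Proof. by rewrite (bigD1 k) //= eqxx big1 ?addr0 // => i /negbTE ->; rewrite scale0r. Qed.

Lemma span_below_mem n (u : 'I_n -> H) j (k : 'I_n) (a : R[i]) :
  (k < j)%N -> span_below u j (a *: u k).
Proof.
move=> kj; exists (fun i => if i == k then a else 0); rewrite sum_scale_delta.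
by split=> // i ji; case: eqP => // ik; move: kj; rewrite -ik ltnNge ji.
Qed.

Definition cfree n (u : 'I_n -> H) : Prop :=
  forall c : 'I_n -> R[i], \sum_i c i *: u i = 0 -> forall i, c i = 0.

Lemma span_below_notin n (u : 'I_n -> H) (k : 'I_n) : cfree u -> ~ span_below u k (u k).
Proof.
move=> hind [c [hc hz]].
have hs : \sum_i (c i - (if i == k then 1 else 0)) *: u i = 0.
  by under eq_bigr => i _ do rewrite scalerBl; rewrite sumrB sum_scale_delta -hc scale1r subrr.
by move: (hind _ hs k); rewrite eqxx hz // sub0r => /eqP; rewrite oppr_eq0 oner_eq0.
Qed.

Lemma cspan_span_below n (u : 'I_n -> H) j : cspan (ord_fun u) j `<=` span_below u j.
Proof.
apply: rspan_min; first exact: span_below_real_subspace.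
move=> l hl; have lj : (l./2 < j)%N.
  by rewrite -ltn_double (leq_ltn_trans _ hl) // -{2}(odd_double_half l) leq_addl.
rewrite /cgen /ord_fun; case: insubP => [k _ kE|_] /=; last first.
  by rewrite scaler0; case: ifP => _; apply: real_subspace0 (span_below_real_subspace _ _).
by case: ifP => _; last rewrite -[u k]scale1r; apply: span_below_mem; rewrite kE.
Qed.

Lemma gs_neq0 n (u : 'I_n -> H) (j : 'I_n) : cfree u -> gs (ord_fun u) j != 0.
Proof.
move=> hind; apply/eqP => gs0; apply: (span_below_notin hind (k := j)).
rewrite -ord_funE; apply: cspan_span_below.
have [PS _] := cprojP (ord_fun u) j.
by move/eqP: gs0; rewrite subr_eq0 => /eqP ->.
Qed.

(** * Finitely additive measures *)

Ltac symp_expand := rewrite ?(scalerDr, scalerBr, scaleiC, scaleii,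
  sympDl, sympDr, sympBl, sympBr, sympNl, sympNr, sympZl, sympZr, symp_il, symp_ir,
  ripDl, ripDr, ripBl, ripBr, ripNl, ripNr, ripZl, ripZr, rip_il, rip_ir).

Section Measure.
Variable mu : set H -> R.
Hypothesis mu_fa : fin_add_prob_measure ip mu.

Lemma mu_ge0 E : closed_real_subspace ip E -> 0 <= mu E.
Proof. by case: mu_fa => h _ _ _ _ /h /andP[]. Qed.

Lemma mu_le1 E : closed_real_subspace ip E -> mu E <= 1.
Proof. by case: mu_fa => h _ _ _ _ /h /andP[]. Qed.

Lemma mu_set0 : mu [set 0] = 0.
Proof. by case: mu_fa. Qed.

Lemma mu_le E F : closed_real_subspace ip E -> closed_real_subspace ip F ->
  E `<=` F -> mu E <= mu F.
Proof. by case: mu_fa => _ _ _ h _; apply: h. Qed.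

(* [x, y] witness [A <> B]: a subspace separated from itself is isotropic. *)
Lemma mu_join2 (A B : set H) x y :
  closed_real_subspace ip A -> closed_real_subspace ip B ->
  A x -> A y -> symp x y != 0 -> Defs.separated ip A B ->
  mu (pjoin ip ([set A] `|` [set B])) = mu A + mu B.
Proof.
move=> hA hB Ax Ay xy sAB.
have AB : A <> B by move=> eAB; move: xy; rewrite sympC [symp y x]sAB ?oppr0 ?eqxx // -eAB.
have hQ : [set A] `|` [set B] `<=` closed_real_subspace ip by move=> E [->|->].
have hfin : finite_set ([set A] `|` [set B]) by rewrite finite_setU; split; apply: finite_set1.
have hsep : pairwise_separated ip ([set A] `|` [set B]).
  by move=> E F [->|->] [->|->] // _; apply: separated_sym.
case: mu_fa => _ _ _ _ /(_ _ hQ hfin hsep).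
rewrite esum_fset // => [|E]; last by rewrite inE => /hQ /mu_ge0; rewrite lee_fin.
rewrite fsbigU0 ?finite_set1 //; last by move=> E [-> /AB].
by rewrite !fsbig_set1 /= -EFinD => -[].
Qed.

Lemma mu_plane_join a1 a2 r : symp a1 r = 0 -> symp a2 r = 0 -> symp a1 a2 != 0 ->
  mu (lspan [:: a1; a2; r]) = mu (lspan [:: a1; a2]) + mu (lspan [:: r]).
Proof.
move=> h1 h2 h12.
rewrite -(mu_join2 (lspan_closed _) (lspan_closed _) (lspan_mem 0 _) (lspan_mem 1 _)) //.
  congr mu; symmetry; apply: pjoin2_eq; first exact: lspan_closed.
  - apply: lspan_min; first exact: lspan_real_subspace.
    by move=> [|[|]] // _; [apply: (lspan_mem 0) | apply: (lspan_mem 1)].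
  - apply: lspan_min; first exact: lspan_real_subspace.
    by move=> [|] // _; apply: (lspan_mem 2).
  move=> t /lspan3P[k1 [k2 [k3 ->]]]; exists (k1%:C *: a1 + k2%:C *: a2), (k3%:C *: r).
  by split=> //; [apply/lspan2P; exists k1, k2 | apply/lspan1P; exists k3].
by apply: separated_lspan => -[|[|]] [|] //.
Qed.

(* Both planes split off [lspan [:: r]] from the same space [lspan [:: a1; a2; r]]. *)
Lemma mu_shear a1 a2 r (s1 s2 : R) :
  symp a1 r = 0 -> symp a2 r = 0 -> symp a1 a2 != 0 ->
  mu (lspan [:: a1; a2]) = mu (lspan [:: a1 + s1%:C *: r; a2 + s2%:C *: r]).
Proof.
move=> h1 h2 h12.
have hrr := symp_xx r; have h2r : symp r a2 = 0 by rewrite sympC h2 oppr0.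
have b1r : symp (a1 + s1%:C *: r) r = 0 by rewrite sympDl sympZl h1 hrr mulr0 addr0.
have b2r : symp (a2 + s2%:C *: r) r = 0 by rewrite sympDl sympZl h2 hrr mulr0 addr0.
have b12 : symp (a1 + s1%:C *: r) (a2 + s2%:C *: r) != 0.
  by rewrite !(sympDl, sympDr, sympZl, sympZr) h1 h2r hrr !mulr0 !addr0.
have := mu_plane_join h1 h2 h12; rewrite -(lspan3_shear a1 a2 r s1 s2) mu_plane_join //; lra.
Qed.

Lemma mu_cline_orth xi eta : ip xi eta = 0 -> xi != 0 -> eta != 0 ->
  mu (cline xi) = mu (cline eta).
Proof.
move=> o xn en.
have o' : ip eta xi = 0 by rewrite ipC o conjc0.
have [rxe sxe] : rip xi eta = 0 /\ symp xi eta = 0 by rewrite /rip /symp o.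
have [rex sex] : rip eta xi = 0 /\ symp eta xi = 0 by rewrite /rip /symp o'.
clear o o'.
have zeros := (rxe, sxe, rex, sex, symp_xx xi, symp_xx eta).
have hx := rip_gt0 xn; have he := rip_gt0 en.
pose t := rip xi xi / rip eta eta.
have ht : t * rip eta eta = rip xi xi by rewrite divfK // gt_eqF.
have t0 : t != 0 by apply: mulf_neq0; rewrite ?invr_eq0 gt_eqF.
(* Three shears: (xi, i xi) ~> (xi + eta, i xi) ~> (xi + eta, t i eta) ~> (eta, t i eta);
   [t] is chosen so that [i xi - t i eta] is symplectically orthogonal to [xi + eta]. *)
rewrite /cline (@mu_shear xi ('i *: xi) eta 1 0); first last.
- by symp_expand; rewrite ?zeros; apply/eqP => h; lra.
- by symp_expand; rewrite ?zeros ?mulr0; lra.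
- by [].
rewrite rmorph1 rmorph0 scale1r scale0r addr0.
rewrite (@mu_shear (xi + eta) ('i *: xi) ('i *: xi - t%:C *: ('i *: eta)) 0 (-1)); first last.
- by symp_expand; rewrite ?zeros; apply/eqP => h; lra.
- by symp_expand; rewrite ?zeros ?mulr0; lra.
- by symp_expand; rewrite ?zeros ?mulr0; lra.
rewrite rmorph0 scale0r addr0 rmorphN1 scaleN1r opprB ['i *: xi + _]addrC subrK.
rewrite (@mu_shear (xi + eta) (t%:C *: ('i *: eta)) xi (-1) 0); first last.
- by symp_expand; rewrite ?zeros; apply/eqP => h; lra.
- by symp_expand; rewrite ?zeros ?mulr0; lra.
- by symp_expand; rewrite ?zeros ?mulr0; lra.
by rewrite rmorphN1 scaleN1r rmorph0 scale0r addr0 [xi + eta]addrC addrK lspan2_scale.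
Qed.

Lemma mu_cspan d n : mu (cspan d n) = \sum_(j < n) mu (cline (gs d j)).
Proof.
elim: n => [|n IH]; first by rewrite cspan0 big_ord0 mu_set0.
rewrite big_ord_recr /= -IH addrC.
have [g0|gn] := eqVneq (gs d n) 0.
  have -> : cspan d n.+1 = cspan d n.
    apply/seteqP; split; last exact: cspan_le.
    by move=> _ /cspanS_gs[y [r [s [hy ->]]]]; rewrite g0 !scaler0 !addr0.
  by rewrite g0 cline0 mu_set0 add0r.
rewrite -cspanS_join (mu_join2 _ _ (lspan_mem 0 _) (lspan_mem 1 _)) //=.
- exact: lspan_closed.
- exact: cspan_closed.
- by rewrite symp_ir oppr_eq0 gt_eqF // rip_gt0.
by apply: orth_separated => x y hx hy; apply: ip_cline_l hx; apply: gs_orth.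
Qed.

Lemma mu_cline_eq w0 w1 w2 w : ip w0 w1 = 0 -> ip w0 w2 = 0 -> ip w1 w2 = 0 ->
  w0 != 0 -> w1 != 0 -> w2 != 0 -> w != 0 -> mu (cline w) = mu (cline w2).
Proof.
move=> o01 o02 o12 n0 n1 n2 nw.
(* [z], in the plane of [w0, w1], is orthogonal to [w] and to [w2];
   if [z = 0] then [w] is orthogonal to [w0]. *)
pose z := ip w1 w *: w0 - ip w0 w *: w1.
have ozw : ip z w = 0 by rewrite ipDl ipNl !ipZl mulrC subrr.
have oz2 : ip z w2 = 0 by rewrite ipDl ipNl !ipZl o02 o12 !mulr0 subrr.
have [z0|zn] := eqVneq z 0; last by rewrite -(mu_cline_orth ozw zn nw) (mu_cline_orth oz2).
have o0w : ip w0 w = 0.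
  move: (ip0l w1); rewrite -z0 ipDl ipNl !ipZl o01 mulr0 sub0r => /eqP.
  by rewrite oppr_eq0 mulf_eq0 (negbTE (ip_xx_neq0 n1)) orbF => /eqP.
by rewrite -(mu_cline_orth o0w n0 nw) (mu_cline_orth o02).
Qed.

Lemma mu_cline0 w : infinite_dimensional H -> mu (cline w) = 0.
Proof.
move=> hinf; have [->|wn] := eqVneq w 0; first by rewrite cline0 mu_set0.
apply/eqP; rewrite eq_le mu_ge0 ?andbT; last exact: lspan_closed.
apply: natmul_le1_le0 => N.
have [u hu] := hinf N.+3; pose d := ord_fun u.
have gsn j : (j < N.+3)%N -> gs d j != 0 by move=> hj; apply: (gs_neq0 (Ordinal hj) hu).
have eqj j : (j < N.+3)%N -> mu (cline (gs d j)) = mu (cline w).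
  move=> hj; rewrite [RHS](@mu_cline_eq (gs d 0) (gs d 1) (gs d 2)) ?gs_orth2 ?gsn //.
  have [->//|j2] := eqVneq j 2.
  exact: mu_cline_orth (gs_orth2 _ j2) (gsn _ hj) (gsn 2 isT).
have := mu_le1 (cspan_closed d N.+3).
rewrite mu_cspan (eq_bigr _ (fun (j : 'I__) _ => eqj j (ltn_ord j))) sumr_const card_ord.
rewrite -[mu _ *+ _]mulr_natl.
apply: le_trans; apply: ler_wpM2r; last by rewrite ler_nat -addn3 leq_addr.
exact: mu_ge0 (lspan_closed _).
Qed.

Lemma mu_finite_dim S : infinite_dimensional H -> finite_dim_real_subspace S -> mu S = 0.
Proof.
move=> hinf [n [v ->]]; rewrite real_span_range; set d := ord_fun v.
have cspan0 : mu (cspan d n) = 0 by rewrite mu_cspan big1 // => j _; apply: mu_cline0.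
apply/eqP; rewrite eq_le mu_ge0 ?andbT -?cspan0; last exact: rspan_closed.
apply: mu_le; [exact: rspan_closed | exact: cspan_closed |].
by apply: (rspan_min (cspan_real_subspace _ _)) => i; apply: cspan_mem.
Qed.

End Measure.

Lemma prob_measure_fin_add mu : prob_measure ip mu -> fin_add_prob_measure ip mu.
Proof.
by case=> h1 h2 h3 h4 h5; split=> // Q hQ /finite_set_countable; apply: h5.
Qed.

Lemma pjoin_gs_dense d : (forall x e, 0 < e -> exists k, hnorm ip (x - d k) < e) ->
  pjoin ip (range (fun k => cline (gs d k))) = [set: H].
Proof.
move=> hd; apply/seteqP; split=> // x _ e he.
have [k hk] := hd x e he; exists (d k); split=> //.
apply: (@rspan_real_span _ _ (cgen (gs d)) k.+1.*2); last exact/cspan_gs/cspan_mem.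
move=> i _; exists (cline (gs d i./2)); first by exists i./2.
by rewrite /cgen; case: ifP => _; [apply: (lspan_mem 1) | apply: (lspan_mem 0)].
Qed.

Lemma no_prob_measure mu : infinite_dimensional H -> hseparable ip -> ~ prob_measure ip mu.
Proof.
move=> hinf [d hd] hmu; have hfa := prob_measure_fin_add hmu.
pose Q := range (fun k => cline (gs d k)).
have hQ : Q `<=` closed_real_subspace ip by move=> _ [k _ <-]; apply: lspan_closed.
have cQ : countable Q by apply: sub_countable (card_image_le _ _) _; apply: countableP.
have sQ : pairwise_separated ip Q.
  move=> _ _ [j _ <-] [k _ <-] jk; apply: orth_separated => x y hx hy.
  apply: ip_cline_l hx; apply: ip_cline_r hy; apply: gs_orth2.
  by apply/eqP => ejk; apply: jk; rewrite ejk.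
case: hmu => _ _ h1 _ /(_ Q hQ cQ sQ).
rewrite pjoin_gs_dense // h1 esum1 => [[/eqP]|]; first by rewrite oner_eq0.
by move=> _ [k _ <-]; rewrite (mu_cline0 hfa _ hinf).
Qed.

End InnerProduct.

Unset Implicit Arguments.

Theorem theorem5p3 (R : realType) (H : lmodType R[i]) (ip : H -> H -> R[i]) :
  is_hilbert ip -> infinite_dimensional H ->
  (forall mu : set H -> R, fin_add_prob_measure ip mu ->
     forall S : set H, finite_dim_real_subspace S -> mu S = 0)
  /\ (hseparable ip -> ~ exists mu : set H -> R, prob_measure ip mu).
Proof.
move=> [hip _] hinf; split.
- by move=> mu hmu S hS; apply: (mu_finite_dim hip hmu hinf hS).
- by move=> hsep [mu hmu]; apply: (no_prob_measure hip hinf hsep hmu).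
Qed.
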